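(* In the weighted kidney exchange game (W-KEG), even assuming players cannot hide vertices, a player can have a strict incentive to misreport her weights: there exists a W-KEG instance in which some player $p$ strictly increases her true utility by reporting a different (larger) weight $w^p_{vu}$ for some external edge $(v,u)$ with $v\in V^p$, the independent agent then computing its maximum-weight matching with the reported weights.
   Context: W-KEG: players $N=\{1,\dots,n\}$; player $p$ has internal graph $G^p=(V^p,E^p)$ (pairwise disjoint vertex sets); $E^I$ is a set of external edges each joining vertices of two different players; $E^I_p$ is the set of external edges incident to $V^p$. Each player $p$ has nonnegative weights $w^p_e$ on $E^p\cup E^I_p$. A strategy of player $p$ is a matching $M^p$ of $G^p$. The independent agent selects a maximum-weight matching $M^I$ of the external edges whose endpoints are uncovered by $\bigcup_pM^p$, where an external edge $(v,u)$ with $v\in V^i$, $u\in V^j$ has weight $w^I_{vu}=w^i_{vu}+w^j_{vu}$ computed from the players' reported weights. With $M^I_p$ the edges of $M^I$ incident to $V^p$, player $p$'s (true) utility is $\sum_{e\in M^p}w^p_e+\sum_{e\in M^I_p}w^p_e$ with her true weights. *)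

From mathcomp Require Import all_boot.
Set Implicit Arguments. Unset Strict Implicit. Unset Printing Implicit Defensive.

Section WKEG.
Variables (n : nat) (V : finType) (own : V -> 'I_n).
(* own v = the player whose vertex set V^p contains v; the V^p are thus
   pairwise disjoint: V^p = [set v | own v == p].  Edges are 2-element
   vertex sets. *)

Definition Vp (p : 'I_n) : {set V} := [set v | own v == p].
Definition is_edge (e : {set V}) : bool := #|e| == 2.

Definition internal_ok (Eint : 'I_n -> {set {set V}}) : Prop :=
  forall p e, e \in Eint p -> is_edge e /\ e \subset Vp p.

Definition external_ok (EI : {set {set V}}) : Prop :=
  forall e, e \in EI ->
    is_edge e /\ [exists u in e, exists v in e, own u != own v].

Definition EIp (EI : {set {set V}}) (p : 'I_n) : {set {set V}} :=
  [set e in EI | [exists v in e, own v == p]].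

Definition is_matching (E M : {set {set V}}) : Prop :=
  M \subset E /\ forall e1 e2, e1 \in M -> e2 \in M -> e1 != e2 -> [disjoint e1 & e2].

Definition profile_ok (Eint : 'I_n -> {set {set V}}) (Ms : 'I_n -> {set {set V}}) : Prop :=
  forall p, is_matching (Eint p) (Ms p).

Definition covered (Ms : 'I_n -> {set {set V}}) : {set V} :=
  \bigcup_(p < n) \bigcup_(e in Ms p) e.

Definition available (EI : {set {set V}}) (Ms : 'I_n -> {set {set V}}) : {set {set V}} :=
  [set e in EI | [disjoint e & covered Ms]].

(* w^I_e = w^i_e + w^j_e, for e joining V^i and V^j, from reported weights r *)
Definition wI (r : 'I_n -> {set V} -> nat) (e : {set V}) : nat :=
  \sum_(p < n | [exists v in e, own v == p]) r p e.

Definition max_IA (EI : {set {set V}}) (Ms : 'I_n -> {set {set V}})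
  (r : 'I_n -> {set V} -> nat) (MI : {set {set V}}) : Prop :=
  is_matching (available EI Ms) MI /\
  forall M, is_matching (available EI Ms) M ->
    \sum_(e in M) wI r e <= \sum_(e in MI) wI r e.

Definition utility (EI : {set {set V}}) (w : 'I_n -> {set V} -> nat)
  (Ms : 'I_n -> {set {set V}}) (MI : {set {set V}}) (p : 'I_n) : nat :=
  \sum_(e in Ms p) w p e + \sum_(e in MI | e \in EIp EI p) w p e.

Definition misreport (w : 'I_n -> {set V} -> nat) (p : 'I_n) (e0 : {set V}) (x : nat)
  : 'I_n -> {set V} -> nat :=
  fun q e => if (q == p) && (e == e0) then x else w q e.

End WKEG.

(* Player 0 owns v0 and v1, player 1 owns v2, and there are two conflicting
   external edges: [v0; v2], worth 1 to player 0, and [v1; v2], worth 2 to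
   player 1.  With truthful weights the independent agent picks the heavier
   edge [v1; v2] and player 0 gets nothing; if player 0 inflates her weight on
   [v0; v2] above 2, the agent picks that edge and she gets its true value 1. *)
From mathcomp Require Import all_boot.

Set Implicit Arguments. Unset Strict Implicit. Unset Printing Implicit Defensive.

Section Matchings.
Variable V : finType.
Implicit Types (E M : {set {set V}}) (e : {set V}).

Lemma is_matching0 E : is_matching E set0.
Proof. by split; [rewrite sub0set | move=> ? ?; rewrite inE]. Qed.

Lemma is_matching1 E e : e \in E -> is_matching E [set e].
Proof.
move=> eE; split; first by rewrite sub1set.
by move=> x y; rewrite !inE => /eqP -> /eqP ->; rewrite eqxx.
Qed.

Lemma matching_conflict_cases e1 e2 M :
  e1 != e2 -> ~~ [disjoint e1 & e2] -> is_matching [set e1; e2] M ->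
  [\/ M = set0, M = [set e1] | M = [set e2]].
Proof.
move=> ne12 meet [/subsetP sM disjM].
have sub_single e e' : e' \notin M -> M \subset [set e; e'] -> M \subset [set e].
  move=> e'M /subsetP sM'; apply/subsetP => x xM; rewrite inE.
  by case/set2P: (sM' x xM) => [-> | xe']; [rewrite eqxx | move: e'M; rewrite -xe' xM].
have sM2 : M \subset [set e1; e2] by exact/subsetP.
have [e1M | e1M] := boolP (e1 \in M).
  have e2M : e2 \notin M by apply: contra meet => e2M; rewrite disjM.
  move: (sub_single _ _ e2M sM2); rewrite subset1.
  by case/orP=> /eqP ->; [constructor 2 | constructor 1].
rewrite setUC in sM2.
move: (sub_single _ _ e1M sM2); rewrite subset1.
by case/orP=> /eqP ->; [constructor 3 | constructor 1].
Qed.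

Lemma max_matching_conflict (f : {set V} -> nat) e1 e2 M :
  ~~ [disjoint e1 & e2] -> is_matching [set e1; e2] M ->
  (forall M', is_matching [set e1; e2] M' ->
     \sum_(e in M') f e <= \sum_(e in M) f e) ->
  f e1 < f e2 -> M = [set e2].
Proof.
move=> meet matchM maxM lt12.
have ne12 : e1 != e2 by apply: contraTneq lt12 => ->; rewrite ltnn.
have := maxM _ (is_matching1 (set22 e1 e2)); rewrite big_set1.
have [->|->|//] := matching_conflict_cases ne12 meet matchM.
  by rewrite big_set0 leqn0 => /eqP f2; rewrite f2 in lt12.
by rewrite big_set1 leqNgt lt12.
Qed.

End Matchings.

Definition empty_profile {n : nat} {V : finType} : 'I_n -> {set {set V}} := fun=> set0.

Section EmptyProfile.
Variables (n : nat) (V : finType) (own : V -> 'I_n).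

Lemma profile_ok_empty (Eint : 'I_n -> {set {set V}}) : profile_ok Eint empty_profile.
Proof. by move=> p; apply: is_matching0. Qed.

Lemma available_empty_profile (EI : {set {set V}}) :
  available EI (empty_profile : 'I_n -> _) = EI.
Proof.
have cover0 : covered (empty_profile : 'I_n -> {set {set V}}) = set0.
  by rewrite /covered big1 // => p _; rewrite big_set0.
by apply/setP => e; rewrite inE cover0 -setI_eq0 setI0 eqxx andbT.
Qed.

Lemma utility_empty_profile1 EI w p e :
  e \in EIp own EI p -> utility own EI w empty_profile [set e] p = w p e.
Proof. by move=> eEIp; rewrite /utility big_set0 big_mkcondr big_set1 eEIp. Qed.

Lemma max_IA_conflict (e1 e2 : {set V}) r MI :
  ~~ [disjoint e1 & e2] -> max_IA own [set e1; e2] empty_profile r MI ->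
  wI own r e1 < wI own r e2 -> MI = [set e2].
Proof.
rewrite /max_IA available_empty_profile => meet [matchMI maxMI].
exact: max_matching_conflict.
Qed.

End EmptyProfile.

Section TwoPlayers.
Variables (V : finType) (own : V -> 'I_2).

Lemma cross_edge_touches u v p :
  own u != own v -> [exists x in [set u; v], own x == p].
Proof.
move=> neq; apply/existsP.
have [pu|pu] := eqVneq (own u) p; first by exists u; rewrite set21 pu eqxx.
exists v; rewrite set22 /=; move: neq pu.
by case: (own u) (own v) p => [[|[|?]] ?] [[|[|?]] ?] [[|[|?]] ?].
Qed.

Lemma cross_edge_external u v :
  own u != own v ->
  is_edge [set u; v] /\ [exists x in [set u; v], exists y in [set u; v], own x != own y].
Proof.
move=> neq; have neq_uv : u != v by apply: contraNneq neq => ->.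
split; first by rewrite /is_edge cards2 neq_uv.
by apply/existsP; exists u; rewrite set21; apply/existsP; exists v; rewrite set22.
Qed.

Lemma wI_cross_edge r u v : own u != own v ->
  wI own r [set u; v] = r ord0 [set u; v] + r ord_max [set u; v].
Proof.
move=> neq; rewrite /wI (eq_bigl xpredT) => [|p]; last exact: cross_edge_touches.
rewrite big_ord_recl big_ord1; congr (_ + r _ _); exact: val_inj.
Qed.

End TwoPlayers.

Definition v0 : 'I_3 := ord0.
Definition v1 : 'I_3 := @Ordinal 3 1 isT.
Definition v2 : 'I_3 := ord_max.

Definition owner (v : 'I_3) : 'I_2 := if v == v2 then ord_max else ord0.

Definition e_low : {set 'I_3} := [set v0; v2].
Definition e_high : {set 'I_3} := [set v1; v2].
Definition ext_edges : {set {set 'I_3}} := [set e_low; e_high].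

Definition true_weight (p : 'I_2) (e : {set 'I_3}) : nat :=
  if p == ord0 then (if e == e_low then 1 else 0)
  else (if e == e_high then 2 else 0).

Lemma owner_v0v2 : owner v0 != owner v2. Proof. by []. Qed.
Lemma owner_v1v2 : owner v1 != owner v2. Proof. by []. Qed.

Lemma e_low_neq_high : e_low != e_high.
Proof. by apply/eqP => /setP /(_ v0); rewrite !inE. Qed.

Lemma e_low_meets_high : ~~ [disjoint e_low & e_high].
Proof. by apply/negP => /disjointFr /(_ (set22 v0 v2)); rewrite set22. Qed.

Lemma ext_edges_ok : external_ok owner ext_edges.
Proof.
move=> e /set2P[] ->.
  exact: cross_edge_external owner_v0v2.
exact: cross_edge_external owner_v1v2.
Qed.

Lemma wI_e_low r : wI owner r e_low = r ord0 e_low + r ord_max e_low.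
Proof. exact: wI_cross_edge owner_v0v2. Qed.

Lemma wI_e_high r : wI owner r e_high = r ord0 e_high + r ord_max e_high.
Proof. exact: wI_cross_edge owner_v1v2. Qed.

Lemma e_low_ext0 : e_low \in EIp owner ext_edges ord0.
Proof. by rewrite inE set21 cross_edge_touches. Qed.

Lemma e_high_ext0 : e_high \in EIp owner ext_edges ord0.
Proof. by rewrite inE set22 cross_edge_touches. Qed.

Theorem lemma3 :
  exists (n : nat) (V : finType) (own : V -> 'I_n)
         (Eint : 'I_n -> {set {set V}}) (EI : {set {set V}})
         (w : 'I_n -> {set V} -> nat),
    internal_ok own Eint /\ external_ok own EI /\
    exists (Ms : 'I_n -> {set {set V}}) (p : 'I_n) (e0 : {set V}) (x : nat),
      profile_ok Eint Ms /\ e0 \in EIp own EI p /\ w p e0 < x /\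
      forall MI MI' : {set {set V}},
        max_IA own EI Ms w MI ->
        max_IA own EI Ms (misreport w p e0 x) MI' ->
        utility own EI w Ms MI p < utility own EI w Ms MI' p.
Proof.
exists 2, ('I_3 : finType), owner, empty_profile, ext_edges, true_weight.
split; first by move=> p e; rewrite inE.
split; first exact: ext_edges_ok.
exists empty_profile, ord0, e_low, 3.
split; first exact: profile_ok_empty.
split; first exact: e_low_ext0.
split; first by rewrite /true_weight !eqxx.
move=> MI MI' maxMI maxMI'.
have ne_lh := negbTE e_low_neq_high.
have ne_hl : (e_high == e_low) = false by rewrite eq_sym.
have -> : MI = [set e_high].
  apply: max_IA_conflict e_low_meets_high maxMI _.
  by rewrite wI_e_low wI_e_high /true_weight ne_lh ne_hl !eqxx.
have -> : MI' = [set e_low].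
  have swap : ext_edges = [set e_high; e_low] by rewrite /ext_edges setUC.
  rewrite swap in maxMI'; apply: max_IA_conflict _ maxMI' _.
    by rewrite disjoint_sym e_low_meets_high.
  by rewrite wI_e_low wI_e_high /misreport /true_weight ne_lh ne_hl !eqxx.
by rewrite !utility_empty_profile1 ?e_low_ext0 ?e_high_ext0 // /true_weight ne_hl !eqxx.
Qed.
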